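(* Let $V_A,V_B\subseteq\mathbb{R}^d$ be $k$-dimensional subspaces whose principal angles all equal a common $\theta\in[0,\pi/2]$, with principal vectors $(u_i,v_i)$, and let $w\in\mathbb{R}^d$, $\|w\|=1$, satisfy $\langle w,u_i\rangle=\langle w,v_i\rangle=\alpha$ for all $i=1,\dots,k$. Then $$\eta(V_A,V_B,w) = \alpha\sqrt{k}\,|\tan(\theta/2)|,$$ and the debate advantage $\Delta = \sqrt{(K_A^* )^2+\eta^2}-K_A^*$ (where $K_A^*=\|\Pi_{V_A}w\|$) behaves as $\Delta \sim k\alpha^2\tan^2(\theta/2)/(2K_A^* )$ for small $\theta$ and as $\Delta\sim \alpha\sqrt{k}\tan(\theta/2)$ for large $\theta$.
   Context: Principal angles $\theta_i$ and principal vectors $(u_i,v_i)$: $\cos\theta_i=\max\{\langle u,v\rangle: u\in V_A,\|u\|=1,u\perp u_1..u_{i-1};\ v\in V_B,\|v\|=1,v\perp v_1..v_{i-1}\}$, maximizers $(u_i,v_i)$ with $\langle u_i,v_j\rangle=\cos\theta_i\delta_{ij}$. For $\theta_i>0$, $\tilde v_i=(v_i-\cos\theta_iu_i)/\sin\theta_i$, and the private information value is $\eta(V_A,V_B,w)=\sqrt{\sum_{i:\theta_i>0}\langle w,\tilde v_i\rangle^2}$. ''Small $\theta$'' refers to the regime $\eta\ll K_A^*$ and ''large $\theta$'' to the regime $\eta\gg K_A^*$. *)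

From HB Require Import structures.
From mathcomp Require Import all_boot all_order all_algebra.
From mathcomp Require Import all_classical all_reals all_analysis.
Unset Printing Implicit Defensive.
Import Order.TTheory GRing.Theory Num.Theory.
Local Open Scope ring_scope.

Section Defs.
Variable R : realType.

Definition dotv (d : nat) (x y : 'rV[R]_d) : R := (x *m y^T) 0 0.
Arguments dotv {d}.
Definition normv (d : nat) (x : 'rV[R]_d) : R := Num.sqrt (dotv x x).

Arguments normv {d}.

(* (u_i, v_i)_{i<k} are principal vectors of (V_A, V_B) with
   cos(theta_i) = c i, following the greedy variational definition. *)
Definition principal_vectors (d k : nat) (VA VB : 'M[R]_d)
    (u v : 'I_k -> 'rV[R]_d) (c : 'I_k -> R) : Prop :=
  forall i : 'I_k,
  [/\ (u i <= VA)%MS, (v i <= VB)%MS,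
      dotv (u i) (u i) = 1, dotv (v i) (v i) = 1 &
    [/\ (forall j : 'I_k, (j < i)%N -> dotv (u i) (u j) = 0 /\ dotv (v i) (v j) = 0),
      (forall j : 'I_k, dotv (u i) (v j) = if i == j then c i else 0)
    & (forall x y : 'rV[R]_d, (x <= VA)%MS -> (y <= VB)%MS ->
        dotv x x = 1 -> dotv y y = 1 ->
        (forall j : 'I_k, (j < i)%N -> dotv x (u j) = 0 /\ dotv y (v j) = 0) ->
        dotv x y <= c i)]].

Arguments principal_vectors {d k}.

Definition principal_angles (d k : nat) (VA VB : 'M[R]_d)
    (u v : 'I_k -> 'rV[R]_d) (th : 'I_k -> R) : Prop :=
  principal_vectors VA VB u v (fun i => cos (th i)) /\
  forall i, 0 <= th i <= pi / 2.

Arguments principal_angles {d k}.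

Definition vtilde (d k : nat) (u v : 'I_k -> 'rV[R]_d) (th : 'I_k -> R)
    (i : 'I_k) : 'rV[R]_d :=
  (sin (th i))^-1 *: (v i - cos (th i) *: u i).

Arguments vtilde {d k}.

Definition eta_priv (d k : nat) (u v : 'I_k -> 'rV[R]_d) (th : 'I_k -> R)
    (w : 'rV[R]_d) : R :=
  Num.sqrt (\sum_(i < k | 0 < th i) (dotv w (vtilde u v th i)) ^+ 2).

Arguments eta_priv {d k}.

Definition is_orth_proj (d : nat) (V : 'M[R]_d) (w p : 'rV[R]_d) : Prop :=
  (p <= V)%MS /\ forall x : 'rV[R]_d, (x <= V)%MS -> dotv (w - p) x = 0.

Arguments is_orth_proj {d}.

Definition debate_adv (K et : R) : R := Num.sqrt (K ^+ 2 + et ^+ 2) - K.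

(* The standing configuration of Corollary 2.11: V_A, V_B k-dimensional,
   all principal angles equal theta in [0, pi/2] with principal vectors (u_i, v_i),
   ||w|| = 1, alpha >= 0, <w,u_i> = <w,v_i> = alpha, and p = Pi_{V_A} w (so K_A^* = ||p||). *)
Definition cor_config (d k : nat) (VA VB : 'M[R]_d) (u v : 'I_k -> 'rV[R]_d)
    (theta alpha : R) (w p : 'rV[R]_d) : Prop :=
  [/\ \rank VA = k, \rank VB = k,
      principal_angles VA VB u v (fun _ => theta) &
    [/\
      normv w = 1, 0 <= alpha,
      (forall i, dotv w (u i) = alpha /\ dotv w (v i) = alpha)
    & is_orth_proj VA w p]].

Arguments cor_config {d k}.

End Defs.


Arguments dotv {R d}.
Arguments normv {R d}.
Arguments principal_vectors {R d k}.
Arguments principal_angles {R d k}.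
Arguments vtilde {R d k}.
Arguments eta_priv {R d k}.
Arguments is_orth_proj {R d}.
Arguments debate_adv {R}.
Arguments cor_config {R d k}.

(** With all principal angles equal to [theta] and [w] equally correlated with
    every [u_i] and [v_i], each coordinate [<w, ~v_i>] equals
    [alpha (1 - cos theta) / sin theta = alpha tan (theta/2)], so the
    private information value is [alpha sqrt k tan (theta/2)].  Both regimes
    then follow from the elementary bounds
    [0 <= eta^2/(2K) - Delta <= eta/(2K) * eta^2/(2K)] and
    [0 <= eta - Delta <= K] for [Delta = sqrt (K^2 + eta^2) - K]. *)
From HB Require Import structures.
From mathcomp Require Import all_boot all_order all_algebra.
From mathcomp Require Import all_classical all_reals all_analysis.
From mathcomp.algebra_tactics Require Import ring lra.
Set Implicit Arguments.
Unset Strict Implicit.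
Unset Printing Implicit Defensive.

Import Order.TTheory GRing.Theory Num.Theory.
Local Open Scope ring_scope.

Section Trigonometry.
Context {R : realType}.

Lemma tan_half (t : R) : sin t != 0 -> (1 - cos t) / sin t = tan (t / 2).
Proof.
have -> : sin t = (cos (t / 2) * sin (t / 2)) *+ 2.
  by rewrite -sin_mulr2n; congr sin; field.
have -> : cos t = cos (t / 2) ^+ 2 *+ 2 - 1.
  by rewrite -cos_mulr2n; congr cos; field.
rewrite mulrn_eq0 /= mulf_eq0 negb_or => /andP[cos_neq0 sin_neq0].
have cos2 := cos2sin2 (t / 2).
rewrite /tan mulr2n cos2; field.
by rewrite cos_neq0 sin_neq0.
Qed.

Lemma tan_half_ge0 (t : R) : 0 <= t <= pi -> 0 <= tan (t / 2).
Proof.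
move=> /andP[t_ge0 t_lepi]; have pi_gt0 := pi_gt0 R.
apply: divr_ge0.
- by apply: sin_ge0_pi; apply/andP; split; lra.
- by apply: cos_ge0_pihalf; apply/andP; split; lra.
Qed.

End Trigonometry.

Section PrivateInformation.
Context {R : realType}.

Lemma dotvZr d (x y : 'rV[R]_d) (a : R) : dotv x (a *: y) = a * dotv x y.
Proof. by rewrite /dotv !linearZ /= mxE. Qed.

Lemma dotvBr d (x y z : 'rV[R]_d) : dotv x (y - z) = dotv x y - dotv x z.
Proof. by rewrite /dotv !linearB /= !mxE. Qed.

Lemma dotv_vtilde_uniform d k (u v : 'I_k -> 'rV[R]_d) (theta alpha : R)
    (w : 'rV[R]_d) (i : 'I_k) :
  sin theta != 0 -> dotv w (u i) = alpha -> dotv w (v i) = alpha ->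
  dotv w (vtilde u v (fun _ => theta) i) = alpha * tan (theta / 2).
Proof.
move=> sin_neq0 wu wv.
by rewrite /vtilde dotvZr dotvBr dotvZr wu wv -tan_half //; ring.
Qed.

Lemma eta_priv_uniform d k (u v : 'I_k -> 'rV[R]_d) (theta alpha : R)
    (w : 'rV[R]_d) :
  0 <= theta < pi ->
  (forall i, dotv w (u i) = alpha /\ dotv w (v i) = alpha) ->
  eta_priv u v (fun _ => theta) w = `|alpha| * Num.sqrt k%:R * `|tan (theta / 2)|.
Proof.
move=> /andP[theta_ge0 theta_ltpi] wuv; rewrite /eta_priv.
have [theta_gt0|theta_le0] := ltP 0 theta; last first.
  have -> : theta = 0 by apply/eqP; rewrite eq_le theta_le0.
  by rewrite big_pred0 // sqrtr0 mul0r tan0 normr0 mulr0.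
have sin_neq0 : sin theta != 0.
  by rewrite gt_eqF // sin_gt0_pi // theta_gt0 theta_ltpi.
have dot_vtilde i : dotv w (vtilde u v (fun _ => theta) i) = alpha * tan (theta / 2).
  by case: (wuv i) => wu wv; apply: dotv_vtilde_uniform.
under eq_bigr do rewrite dot_vtilde.
rewrite (eq_bigl xpredT) // sumr_const card_ord -[_ *+ k]mulr_natl.
by rewrite sqrtrM ?ler0n // sqrtr_sqr normrM mulrCA mulrA.
Qed.

End PrivateInformation.

Section DebateAdvantage.
Context {R : realType}.

Lemma debate_adv_small (K e : R) : 0 < K -> 0 <= e ->
  `|debate_adv K e - e ^+ 2 / (2 * K)| <= e / (2 * K) * (e ^+ 2 / (2 * K)).
Proof.
move=> K_gt0 e_ge0; rewrite /debate_adv.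
set s := Num.sqrt _; set x := s - K.
have s_ge0 : 0 <= s by apply: sqrtr_ge0.
have s2 : s ^+ 2 = K ^+ 2 + e ^+ 2 by rewrite sqr_sqrtr // addr_ge0 ?sqr_ge0.
have x_ge0 : 0 <= x by rewrite /x; nra.
have x_lee : x <= e by rewrite /x; nra.
have K_neq0 : K != 0 by rewrite gt_eqF.
(* [e^2 = x (2K + x)], so the error of the first-order term is [x^2/(2K)]. *)
have e2 : e ^+ 2 / (2 * K) = x + x ^+ 2 / (2 * K).
  have -> : e ^+ 2 = x * (2 * K + x) by rewrite /x; lra.
  by field.
have err_ge0 : 0 <= x ^+ 2 / (2 * K) by rewrite divr_ge0 ?sqr_ge0 //; lra.
have inv_ge0 : 0 <= (2 * K)^-1 by rewrite invr_ge0; lra.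
have -> : x - e ^+ 2 / (2 * K) = - (x ^+ 2 / (2 * K)) by rewrite e2; ring.
rewrite normrN ger0_norm // expr2 mulrAC.
apply: le_trans (ler_wpM2r x_ge0 (ler_wpM2r inv_ge0 x_lee)) _.
by apply: ler_wpM2l; [rewrite mulr_ge0 | rewrite e2 lerDl].
Qed.

Lemma debate_adv_large (K e : R) : 0 <= K -> 0 <= e ->
  `|debate_adv K e - e| <= K.
Proof.
move=> K_ge0 e_ge0; rewrite /debate_adv.
set s := Num.sqrt _.
have s_ge0 : 0 <= s by apply: sqrtr_ge0.
have s2 : s ^+ 2 = K ^+ 2 + e ^+ 2 by rewrite sqr_sqrtr // addr_ge0 ?sqr_ge0.
have s_le : s <= K + e by nra.
have e_le : e <= s by nra.
by rewrite ler_norml; apply/andP; split; lra.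
Qed.

End DebateAdvantage.

Section Configuration.
Context {R : realType}.
Variables (d k : nat) (VA VB : 'M[R]_d) (u v : 'I_k -> 'rV[R]_d).
Variables (theta alpha : R) (w p : 'rV[R]_d).
Hypothesis cfg : cor_config VA VB u v theta alpha w p.

Lemma cor_config_theta : (0 < k)%N -> 0 <= theta < pi.
Proof.
move=> k_gt0; case: cfg => _ _ [_ /(_ (Ordinal k_gt0))/andP[theta_ge0 theta_le]] _.
by rewrite theta_ge0 /=; have := pi_gt0 R; lra.
Qed.

Lemma cor_config_eta :
  eta_priv u v (fun _ => theta) w = alpha * Num.sqrt k%:R * `|tan (theta / 2)|.
Proof.
case: cfg => _ _ _ [_ alpha_ge0 wuv _].
have [k0|/cor_config_theta theta_range] := posnP k.
  by rewrite /eta_priv; subst k; rewrite big_ord0 sqrtr0 mulr0 mul0r.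
by rewrite (eta_priv_uniform theta_range wuv) ger0_norm.
Qed.

Lemma cor_config_eta_tan :
  eta_priv u v (fun _ => theta) w = alpha * Num.sqrt k%:R * tan (theta / 2).
Proof.
rewrite cor_config_eta; have [->|/cor_config_theta/andP[theta_ge0 /ltW]] := posnP k.
  by rewrite mulr0n sqrtr0 mulr0 !mul0r.
by move=> theta_le; rewrite ger0_norm // tan_half_ge0 // theta_ge0.
Qed.

End Configuration.

Theorem corollary2p11 (R : realType) :
  (* exact value of eta_priv *)
  (forall (d k : nat) (VA VB : 'M[R]_d) (u v : 'I_k -> 'rV[R]_d)
          (theta alpha : R) (w p : 'rV[R]_d),
     cor_config VA VB u v theta alpha w p ->
     eta_priv u v (fun _ => theta) w = alpha * Num.sqrt k%:R * `|tan (theta / 2)|) /\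
  (* small-theta regime (eta_priv << K_A): Delta ~ k alpha^2 tan^2(theta/2) / (2 K_A ) *)
  (forall eps : R, 0 < eps -> exists delta : R, 0 < delta /\
     forall (d k : nat) (VA VB : 'M[R]_d) (u v : 'I_k -> 'rV[R]_d)
            (theta alpha : R) (w p : 'rV[R]_d),
       cor_config VA VB u v theta alpha w p ->
       let K := normv p in
       let et := eta_priv u v (fun _ => theta) w in
       let T := k%:R * alpha ^+ 2 * tan (theta / 2) ^+ 2 / (2 * K) in
       et < delta * K -> `|debate_adv K et - T| <= eps * T) /\
  (* large-theta regime (eta_priv >> K_A): Delta ~ alpha sqrt(k) tan(theta/2) *)
  (forall eps : R, 0 < eps -> exists M : R, 0 < M /\
     forall (d k : nat) (VA VB : 'M[R]_d) (u v : 'I_k -> 'rV[R]_d)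
            (theta alpha : R) (w p : 'rV[R]_d),
       cor_config VA VB u v theta alpha w p ->
       let K := normv p in
       let et := eta_priv u v (fun _ => theta) w in
       let T := alpha * Num.sqrt k%:R * tan (theta / 2) in
       M * K < et -> `|debate_adv K et - T| <= eps * T).
Proof.
split; first exact: cor_config_eta.
split=> eps eps_gt0.
  exists eps; split => // d k VA VB u v theta alpha w p cfg K et T et_lt.
  have et_ge0 : 0 <= et by apply: sqrtr_ge0.
  have K_gt0 : 0 < K by nra.
  have -> : T = et ^+ 2 / (2 * K).
    by rewrite /T /et (cor_config_eta_tan cfg) !exprMn sqr_sqrtr ?ler0n //; ring.
  apply: (le_trans (debate_adv_small K_gt0 et_ge0)).
  apply: ler_wpM2r; first by apply: divr_ge0; [exact: sqr_ge0 | lra].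
  by rewrite ler_pdivrMr ?mulr_gt0 //; nra.
exists eps^-1; split; first by rewrite invr_gt0.
move=> d k VA VB u v theta alpha w p cfg K et T M_lt.
have -> : T = et by rewrite /T /et (cor_config_eta_tan cfg).
apply: (le_trans (debate_adv_large (sqrtr_ge0 _) (sqrtr_ge0 _))).
by move: M_lt; rewrite -(ltr_pM2l eps_gt0) mulrA divff ?gt_eqF // mul1r => /ltW.
Qed.
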